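(* Fix an integer $L\ge 1$, positive integers $N_1,\dots,N_{L+1},K$, and set $\alpha=N_1/K$, $\beta_\ell=N_{\ell+1}/N_\ell$ for $\ell=1,\dots,L$. Let $\mathcal{P}_{\mathsf X}$ and $\mathcal{P}_{\mathsf H^{(\ell)}}$ ($\ell=1,\dots,L$) be probability densities on $\mathbb{R}$, let $\mathcal{P}(x^{(\ell+1)}\mid z^{(\ell)})$ ($1\le \ell<L$) be transition densities, and let $\mathcal{P}(y\mid z^{(L)})$ be the output transition density. Define the constants $\chi_h^{(\ell)}=\int h^2\mathcal{P}_{\mathsf H^{(\ell)}}(h)\,dh$, $\chi_x^{(1)}=\int x^2\mathcal{P}_{\mathsf X}(x)\,dx$, and recursively $\chi_z^{(\ell)}=N_\ell\chi_x^{(\ell)}\chi_h^{(\ell)}$, $\chi_x^{(\ell)}=\int (x^{(\ell)})^2\mathcal{P}(x^{(\ell)}\mid z^{(\ell-1)})\mathcal{N}(z^{(\ell-1)}\mid 0,\chi_z^{(\ell-1)})\,dz^{(\ell-1)}dx^{(\ell)}$ for $\ell>1$. (A) The state-evolution (SE) equations in the unknowns $\{q_x^{(\ell)},q_h^{(\ell)},q_z^{(\ell)},V^{(\ell)},\Sigma^{(x,\ell)},\Sigma^{(h,\ell)}\}_{\ell=1}^L$ are, for $\ell=1,\dots,L$: $V^{(\ell)}=N_\ell(\chi_h^{(\ell)}\chi_x^{(\ell)}-q_h^{(\ell)}q_x^{(\ell)})$; $q_z^{(L)}=\int \frac{[\int z\,\mathcal{P}(y|z)\mathcal{N}(z\mid\sqrt{\chi_z^{(L)}-V^{(L)}}\xi,V^{(L)})dz]^2}{\int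 \mathcal{P}(y|z)\mathcal{N}(z\mid\sqrt{\chi_z^{(L)}-V^{(L)}}\xi,V^{(L)})dz}\,\mathrm{D}\xi\,dy$; for $\ell<L$: $q_z^{(\ell)}=\int \frac{[\int z^{(\ell)}\mathcal{N}^{(\ell)}_{x|z}(\sqrt{\chi_z^{(\ell)}-V^{(\ell)}}\xi,V^{(\ell)},\zeta,\Sigma^{(x,\ell+1)})dx^{(\ell+1)}dz^{(\ell)}]^2}{\int \mathcal{N}^{(\ell)}_{x|z}(\sqrt{\chi_z^{(\ell)}-V^{(\ell)}}\xi,V^{(\ell)},\zeta,\Sigma^{(x,\ell+1)})dx^{(\ell+1)}dz^{(\ell)}}\,\mathrm{D}\xi\,d\zeta$; $\Sigma^{(x,\ell)}=\frac{N_\ell(\chi_x^{(\ell)}\chi_h^{(\ell)}-q_x^{(\ell)}q_h^{(\ell)})^2}{\beta_\ell q_h^{(\ell)}(q_z^{(\ell)}-N_\ell q_x^{(\ell)}q_h^{(\ell)})}$; $\Sigma^{(h,\ell)}=\frac{\alpha\prod_{l=1}^{\ell-1}\beta_l\,N_\ell(\chi_x^{(\ell)}\chi_h^{(\ell)}-q_x^{(\ell)}q_h^{(\ell)})^2}{q_x^{(\ell)}(q_z^{(\ell)}-N_\ell q_x^{(\ell)}q_h^{(\ell)})}$; $q_x^{(1)}=\int\frac{[\int x\mathcal{P}_{\mathsf X}(x)\mathcal{N}(x|\zeta,\Sigma^{(x,1)})dx]^2}{\int \mathcal{P}_{\mathsf X}(x)\mathcal{N}(x|\zeta,\Sigma^{(x,1)})dx}\,d\zeta$;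 for $\ell>1$: $q_x^{(\ell)}=\int \frac{[\int x^{(\ell)}\mathcal{N}^{(\ell-1)}_{x|z}(\sqrt{\chi_z^{(\ell-1)}-V^{(\ell-1)}}\xi,V^{(\ell-1)},\zeta,\Sigma^{(x,\ell)})dx^{(\ell)}dz^{(\ell-1)}]^2}{\int \mathcal{N}^{(\ell-1)}_{x|z}(\sqrt{\chi_z^{(\ell-1)}-V^{(\ell-1)}}\xi,V^{(\ell-1)},\zeta,\Sigma^{(x,\ell)})dx^{(\ell)}dz^{(\ell-1)}}\,\mathrm{D}\xi\,d\zeta$; $q_h^{(\ell)}=\int\frac{[\int h\mathcal{P}_{\mathsf H^{(\ell)}}(h)\mathcal{N}(h|\zeta,\Sigma^{(h,\ell)})dh]^2}{\int \mathcal{P}_{\mathsf H^{(\ell)}}(h)\mathcal{N}(h|\zeta,\Sigma^{(h,\ell)})dh}\,d\zeta$. (B) The replica fixed-point equations of the MMSE estimator in the unknowns $\{q_x^{(\ell)},q_h^{(\ell)},q_z^{(\ell)},\hat q_x^{(\ell)},\hat q_h^{(\ell)}\}_{\ell=1}^L$ are, for $\ell=1,\dots,L$: $\hat q_x^{(\ell)}=\frac{\beta_\ell q_h^{(\ell)}}{2}\frac{q_z^{(\ell)}-N_\ell q_x^{(\ell)}q_h^{(\ell)}}{N_\ell(\chi_x^{(\ell)}\chi_h^{(\ell)}-q_x^{(\ell)}q_h^{(\ell)})^2}$; $\hat q_h^{(\ell)}=\frac{q_x^{(\ell)}}{2\alpha\prod_{l=1}^{\ell-1}\beta_l}\frac{q_z^{(\ell)}-N_\ell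 q_x^{(\ell)}q_h^{(\ell)}}{N_\ell(\chi_x^{(\ell)}\chi_h^{(\ell)}-q_x^{(\ell)}q_h^{(\ell)})^2}$; $q_h^{(\ell)}=\int\frac{[\int h\mathcal{P}_{\mathsf H^{(\ell)}}(h)\mathcal{N}(h|\zeta,\frac{1}{2\hat q_h^{(\ell)}})dh]^2}{\int \mathcal{P}_{\mathsf H^{(\ell)}}(h)\mathcal{N}(h|\zeta,\frac{1}{2\hat q_h^{(\ell)}})dh}\,d\zeta$; $q_z^{(L)}=\int\frac{[\int z\mathcal{P}(y|z)\mathcal{N}(z|\sqrt{N_Lq_x^{(L)}q_h^{(L)}}\xi,N_L(\chi_x^{(L)}\chi_h^{(L)}-q_x^{(L)}q_h^{(L)}))dz]^2}{\int \mathcal{P}(y|z)\mathcal{N}(z|\sqrt{N_Lq_x^{(L)}q_h^{(L)}}\xi,N_L(\chi_x^{(L)}\chi_h^{(L)}-q_x^{(L)}q_h^{(L)}))dz}\,\mathrm{D}\xi\,dy$; for $\ell<L$: $q_z^{(\ell)}=\int\frac{[\int z^{(\ell)}\mathcal{N}^{(\ell)}_{x|z}(\sqrt{N_\ell q_h^{(\ell)}q_x^{(\ell)}}\xi,N_\ell(\chi_h^{(\ell)}\chi_x^{(\ell)}-q_h^{(\ell)}q_x^{(\ell)}),\zeta,\frac{1}{2\hat q_x^{(\ell+1)}})dx^{(\ell+1)}dz^{(\ell)}]^2}{\int \mathcal{N}^{(\ell)}_{x|z}(\sqrt{N_\ell q_h^{(\ell)}q_x^{(\ell)}}\xi,N_\ell(\chi_h^{(\ell)}\chi_x^{(\ell)}-q_h^{(\ell)}q_x^{(\ell)}),\zeta,\frac{1}{2\hat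 q_x^{(\ell+1)}})dx^{(\ell+1)}dz^{(\ell)}}\,\mathrm{D}\xi\,d\zeta$; $q_x^{(1)}=\int\frac{[\int x\mathcal{P}_{\mathsf X}(x)\mathcal{N}(x|\zeta,\frac{1}{2\hat q_x^{(1)}})dx]^2}{\int \mathcal{P}_{\mathsf X}(x)\mathcal{N}(x|\zeta,\frac{1}{2\hat q_x^{(1)}})dx}\,d\zeta$; for $\ell>1$: $q_x^{(\ell)}=\int\frac{[\int x^{(\ell)}\mathcal{N}^{(\ell-1)}_{x|z}(\sqrt{N_{\ell-1}q_h^{(\ell-1)}q_x^{(\ell-1)}}\xi,N_{\ell-1}(\chi_h^{(\ell-1)}\chi_x^{(\ell-1)}-q_h^{(\ell-1)}q_x^{(\ell-1)}),\zeta,\frac{1}{2\hat q_x^{(\ell)}})dz^{(\ell-1)}dx^{(\ell)}]^2}{\int \mathcal{N}^{(\ell-1)}_{x|z}(\sqrt{N_{\ell-1}q_h^{(\ell-1)}q_x^{(\ell-1)}}\xi,N_{\ell-1}(\chi_h^{(\ell-1)}\chi_x^{(\ell-1)}-q_h^{(\ell-1)}q_x^{(\ell-1)}),\zeta,\frac{1}{2\hat q_x^{(\ell)}})dz^{(\ell-1)}dx^{(\ell)}}\,\mathrm{D}\xi\,d\zeta$. Claim: under the identification $\Sigma^{(x,\ell)}=\frac{1}{2\hat q_x^{(\ell)}}$ and $\Sigma^{(h,\ell)}=\frac{1}{2\hat q_h^{(\ell)}}$ for all $\ell$, the SE equations (A) (with $V^{(\ell)}$ given by its defining equation) coincide with the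 replica fixed-point equations (B); that is, $\{q_x^{(\ell)},q_h^{(\ell)},q_z^{(\ell)},\Sigma^{(x,\ell)},\Sigma^{(h,\ell)}\}$ together with $V^{(\ell)}=N_\ell(\chi_h^{(\ell)}\chi_x^{(\ell)}-q_h^{(\ell)}q_x^{(\ell)})$ solves (A) if and only if $\{q_x^{(\ell)},q_h^{(\ell)},q_z^{(\ell)},\hat q_x^{(\ell)}=1/(2\Sigma^{(x,\ell)}),\hat q_h^{(\ell)}=1/(2\Sigma^{(h,\ell)})\}$ solves (B).
   Context: Notation: $\mathcal{N}(x\mid a,A)=\frac{1}{\sqrt{2\pi A}}\exp(-\frac{(x-a)^2}{2A})$; $\mathrm{D}\xi=\mathcal{N}(\xi\mid 0,1)d\xi$; for $1\le\ell<L$, $\mathcal{N}^{(\ell)}_{x|z}(a,A,b,B)=\mathcal{P}(x^{(\ell+1)}\mid z^{(\ell)})\,\mathcal{N}(z^{(\ell)}\mid a,A)\,\mathcal{N}(x^{(\ell+1)}\mid b,B)$, viewed as a function of $(z^{(\ell)},x^{(\ell+1)})$. Integrals with $d\zeta$ are with respect to Lebesgue measure over $\mathbb{R}$. These equations arise for the multi-layer model $\mathbf{X}^{(\ell+1)}=\phi^{(\ell)}(\mathbf{H}^{(\ell)}\mathbf{X}^{(\ell)},\mathbf{W}^{(\ell)})$, $\mathbf{Y}=\mathbf{X}^{(L+1)}$, with i.i.d. entries $\mathbf{X}^{(1)}\sim\mathcal{P}_{\mathsf X}$, $\mathbf{H}^{(\ell)}\sim\mathcal{P}_{\mathsf H^{(\ell)}}$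 and componentwise transitions; (A) is the state evolution of the ML-BiGAMP algorithm and (B) the replica-symmetric fixed-point equations of the MMSE estimator. All quantities are assumed such that the denominators and square roots appearing are well defined (e.g. $\Sigma^{(x,\ell)},\Sigma^{(h,\ell)},\hat q_x^{(\ell)},\hat q_h^{(\ell)}>0$, $0\le V^{(\ell)}\le\chi_z^{(\ell)}$). *)

From HB Require Import structures.
From mathcomp Require Import all_boot all_order all_algebra.
From mathcomp Require Import all_classical all_reals all_analysis.
Set Implicit Arguments. Unset Strict Implicit. Unset Printing Implicit Defensive.
Import Order.TTheory GRing.Theory Num.Theory.
Import numFieldNormedType.Exports.
Local Open Scope classical_set_scope.
Local Open Scope ring_scope.

Section Defs.
Variable R : realType.

Definition int1 (f : R -> R) : R := Rintegral (@lebesgue_measure R) setT f.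

Definition int2 (f : R * R -> R) : R :=
  Rintegral ((@lebesgue_measure R) \x (@lebesgue_measure R))%E setT f.

Definition gauss (x a A : R) : R :=
  (Num.sqrt (2 * pi * A))^-1 * expR (- ((x - a) ^+ 2) / (2 * A)).

Definition is_density (f : R -> R) : Prop :=
  measurable_fun setT f /\ (forall x, 0 <= f x) /\
  (\int[@lebesgue_measure R]_x (f x)%:E = 1)%E.

(* Pt l x z stands for P(x^(l+1) = x | z^(l) = z);
   N^(l)_{x|z}(a,A,b,B) evaluated at p = (z^(l), x^(l+1)) *)
Definition Nxz (Pt : nat -> R -> R -> R) (l : nat) (a A b B : R) (p : R * R) : R :=
  Pt l p.2 p.1 * gauss p.1 a A * gauss p.2 b B.

Definition chih (PH : nat -> R -> R) (l : nat) : R :=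
  int1 (fun h => h ^+ 2 * PH l h).

(* chi_x^(l), with chi_z^(l) = N_l chi_x^(l) chi_h^(l) inlined in the recursion *)
Fixpoint chix (N : nat -> nat) (PX : R -> R) (PH : nat -> R -> R)
  (Pt : nat -> R -> R -> R) (l : nat) : R :=
  match l with
  | 0 => 0
  | m.+1 =>
    match m with
    | 0 => int1 (fun x => x ^+ 2 * PX x)
    | _ => int2 (fun p => p.2 ^+ 2 * Pt m p.2 p.1 *
                 gauss p.1 0 ((N m)%:R * chix N PX PH Pt m * chih PH m))
    end
  end.

Definition chiz N PX PH Pt (l : nat) : R :=
  (N l)%:R * chix N PX PH Pt l * chih PH l.

Definition alpha (N : nat -> nat) (K : nat) : R := (N 1%N)%:R / K%:R.
Definition beta (N : nat -> nat) (l : nat) : R := (N l.+1)%:R / (N l)%:R.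
Definition prod_beta N (k : nat) : R := \prod_(1 <= l < k) beta N l.

Definition scal (P : R -> R) (S : R) : R :=
  int1 (fun zeta =>
    (int1 (fun u => u * P u * gauss u zeta S)) ^+ 2 /
     int1 (fun u => P u * gauss u zeta S)).

(* int [ int z P(y|z) N(z | sqrt(c) xi, v) dz ]^2 / [ int P(y|z) N(..) dz ] Dxi dy,
   with q = (xi, y); Py y z stands for P(y | z) *)
Definition qz_out (Py : R -> R -> R) (c v : R) : R :=
  int2 (fun q =>
    gauss q.1 0 1 *
    ((int1 (fun z => z * Py q.2 z * gauss z (Num.sqrt c * q.1) v)) ^+ 2 /
      int1 (fun z => Py q.2 z * gauss z (Num.sqrt c * q.1) v))).

Definition qz_mid (Pt : nat -> R -> R -> R) (l : nat) (c v S : R) : R :=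
  int2 (fun q =>
    gauss q.1 0 1 *
    ((int2 (fun p => p.1 * Nxz Pt l (Num.sqrt c * q.1) v q.2 S p)) ^+ 2 /
      int2 (fun p => Nxz Pt l (Num.sqrt c * q.1) v q.2 S p))).

Definition qx_mid (Pt : nat -> R -> R -> R) (l : nat) (c v S : R) : R :=
  int2 (fun q =>
    gauss q.1 0 1 *
    ((int2 (fun p => p.2 * Nxz Pt l (Num.sqrt c * q.1) v q.2 S p)) ^+ 2 /
      int2 (fun p => Nxz Pt l (Num.sqrt c * q.1) v q.2 S p))).

Definition SE_eqs (L : nat) (N : nat -> nat) (K : nat) (PX : R -> R)
  (PH : nat -> R -> R) (Pt : nat -> R -> R -> R) (Py : R -> R -> R)
  (qx qh qz V Sx Sh : nat -> R) : Prop :=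
  let chx := chix N PX PH Pt in
  let chh := chih PH in
  let chz := chiz N PX PH Pt in
  forall l : nat, (1 <= l <= L)%N ->
  (V l = (N l)%:R * (chh l * chx l - qh l * qx l) /\
      (l = L -> qz l = qz_out Py (chz l - V l) (V l)) /\
      ((l < L)%N -> qz l = qz_mid Pt l (chz l - V l) (V l) (Sx l.+1)) /\
      Sx l = (N l)%:R * (chx l * chh l - qx l * qh l) ^+ 2 /
             (beta N l * qh l * (qz l - (N l)%:R * qx l * qh l)) /\
      Sh l = alpha N K * prod_beta N l * (N l)%:R *
               (chx l * chh l - qx l * qh l) ^+ 2 /
             (qx l * (qz l - (N l)%:R * qx l * qh l)) /\
      (l = 1%N -> qx l = scal PX (Sx 1%N)) /\
      ((1 < l)%N -> qx l = qx_mid Pt l.-1 (chz l.-1 - V l.-1) (V l.-1) (Sx l))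
    /\ qh l = scal (PH l) (Sh l)).

Definition RS_eqs (L : nat) (N : nat -> nat) (K : nat) (PX : R -> R)
  (PH : nat -> R -> R) (Pt : nat -> R -> R -> R) (Py : R -> R -> R)
  (qx qh qz hqx hqh : nat -> R) : Prop :=
  let chx := chix N PX PH Pt in
  let chh := chih PH in
  forall l : nat, (1 <= l <= L)%N ->
  (hqx l = beta N l * qh l / 2 * (qz l - (N l)%:R * qx l * qh l) /
             ((N l)%:R * (chx l * chh l - qx l * qh l) ^+ 2) /\
      hqh l = qx l / (2 * alpha N K * prod_beta N l) *
             (qz l - (N l)%:R * qx l * qh l) /
             ((N l)%:R * (chx l * chh l - qx l * qh l) ^+ 2) /\
      qh l = scal (PH l) (1 / (2 * hqh l)) /\
      (l = L -> qz l = qz_out Py ((N l)%:R * qx l * qh l)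
                               ((N l)%:R * (chx l * chh l - qx l * qh l))) /\
      ((l < L)%N -> qz l = qz_mid Pt l ((N l)%:R * qh l * qx l)
                               ((N l)%:R * (chh l * chx l - qh l * qx l))
                               (1 / (2 * hqx l.+1))) /\
      (l = 1%N -> qx l = scal PX (1 / (2 * hqx 1%N)))
    /\ ((1 < l)%N -> qx l = qx_mid Pt l.-1 ((N l.-1)%:R * qh l.-1 * qx l.-1)
                               ((N l.-1)%:R * (chh l.-1 * chx l.-1 - qh l.-1 * qx l.-1))
                               (1 / (2 * hqx l)))).

End Defs.

From HB Require Import structures.
From mathcomp Require Import all_boot all_order all_algebra.
From mathcomp Require Import all_classical all_reals all_analysis.
From mathcomp Require Import ring.
Set Implicit Arguments. Unset Strict Implicit. Unset Printing Implicit Defensive.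
Import Order.TTheory GRing.Theory Num.Theory.
Local Open Scope ring_scope.

(* The substitution Sigma = 1/(2 qhat) is an involution, and with
   V = N (chi_h chi_x - q_h q_x) the variance chi_z - V of the Gaussian mean
   is exactly N q_x q_h.  Hence every SE equation is literally the
   corresponding replica equation, except the two Sigma equations, which are
   (up to the factor 2) the reciprocals of the qhat equations. *)

Section HalfInverse.
Context {F : numFieldType}.

Lemma div1_double_invK (x : F) : 1 / (2 * (1 / (2 * x))) = x.
Proof. by rewrite !div1r invfM invrK mulrA mulVf ?mul1r ?pnatr_eq0. Qed.

Lemma eq_iff_half_inv (x y : F) : x = y <-> 1 / (2 * x) = y^-1 / 2.
Proof.
rewrite div1r invfM mulrC; split=> [-> // | /(mulIf _) eq_inv].
by apply: invr_inj; apply: eq_inv; rewrite invr_eq0 pnatr_eq0.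
Qed.

Lemma Sx_eq_iff_hqx_eq {S n e c g : F} :
  S = n * e / (c * g) <-> 1 / (2 * S) = c / 2 * g / (n * e).
Proof.
suff -> : c / 2 * g / (n * e) = (n * e / (c * g))^-1 / 2 by exact: eq_iff_half_inv.
by rewrite invf_div; ring.
Qed.

Lemma Sh_eq_iff_hqh_eq {S a b n e q g : F} :
  S = a * b * n * e / (q * g) <-> 1 / (2 * S) = q / (2 * a * b) * g / (n * e).
Proof.
suff -> : q / (2 * a * b) * g / (n * e) = (a * b * n * e / (q * g))^-1 / 2.
  exact: eq_iff_half_inv.
by rewrite invf_div !invfM; ring.
Qed.

End HalfInverse.

Section GaussianParameters.
Variables (R : realType) (L : nat) (N : nat -> nat).
Variables (PX : R -> R) (PH : nat -> R -> R) (Pt : nat -> R -> R -> R).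
Variables (qx qh V : nat -> R).
Let chx := chix N PX PH Pt.
Let chh := chih PH.
Let chz := chiz N PX PH Pt.
Hypothesis V_def : forall l, (1 <= l <= L)%N ->
  V l = (N l)%:R * (chh l * chx l - qh l * qx l).

Lemma chiz_subV l : (1 <= l <= L)%N -> chz l - V l = (N l)%:R * qh l * qx l.
Proof. by move=> lL; rewrite (V_def lL) /chz /chiz /chx /chh; ring. Qed.

Lemma qz_out_SE_RS (Py : R -> R -> R) l : (1 <= l <= L)%N ->
  qz_out Py (chz l - V l) (V l) =
  qz_out Py ((N l)%:R * qx l * qh l) ((N l)%:R * (chx l * chh l - qx l * qh l)).
Proof.
move=> lL; rewrite (chiz_subV lL) (V_def lL) mulrAC.
by rewrite (mulrC (chh l)) (mulrC (qh l)).
Qed.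

Lemma qz_mid_SE_RS (S : R) l : (1 <= l <= L)%N ->
  qz_mid Pt l (chz l - V l) (V l) S =
  qz_mid Pt l ((N l)%:R * qh l * qx l) ((N l)%:R * (chh l * chx l - qh l * qx l)) S.
Proof. by move=> lL; rewrite (chiz_subV lL) (V_def lL). Qed.

Lemma qx_mid_SE_RS (S : R) l : (l <= L)%N ->
  ((1 < l)%N -> qx l = qx_mid Pt l.-1 (chz l.-1 - V l.-1) (V l.-1) S) <->
  ((1 < l)%N -> qx l = qx_mid Pt l.-1 ((N l.-1)%:R * qh l.-1 * qx l.-1)
                 ((N l.-1)%:R * (chh l.-1 * chx l.-1 - qh l.-1 * qx l.-1)) S).
Proof.
move=> lL; have prev_in_range : (1 < l)%N -> (1 <= l.-1 <= L)%N.
  by case: l lL => [|[|l]] //= /ltnW ->.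
split=> qx_eq l_gt1; have lL1 := prev_in_range l_gt1.
  by rewrite (qx_eq l_gt1) (chiz_subV lL1) (V_def lL1).
by rewrite (qx_eq l_gt1) (chiz_subV lL1) (V_def lL1).
Qed.

End GaussianParameters.

Theorem proposition3 (R : realType) (L : nat) (N : nat -> nat) (K : nat)
  (PX : R -> R) (PH : nat -> R -> R) (Pt : nat -> R -> R -> R) (Py : R -> R -> R)
  (qx qh qz V Sx Sh : nat -> R) :
  (1 <= L)%N ->
  (forall l, (1 <= l <= L.+1)%N -> (0 < N l)%N) ->
  (0 < K)%N ->
  is_density PX ->
  (forall l, (1 <= l <= L)%N -> is_density (PH l)) ->
  (forall l, (1 <= l < L)%N -> forall z, is_density (fun x => Pt l x z)) ->
  (forall z, is_density (fun y => Py y z)) ->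
  (forall l, (1 <= l <= L)%N ->
     V l = (N l)%:R * (chih PH l * chix N PX PH Pt l - qh l * qx l)) ->
  (forall l, (1 <= l <= L)%N -> 0 < Sx l /\ 0 < Sh l) ->
  (forall l, (1 <= l <= L)%N -> 0 <= V l <= chiz N PX PH Pt l) ->
  (SE_eqs L N K PX PH Pt Py qx qh qz V Sx Sh <->
   RS_eqs L N K PX PH Pt Py qx qh qz
     (fun l => 1 / (2 * Sx l)) (fun l => 1 / (2 * Sh l))).
Proof.
move=> _ _ _ _ _ _ _ V_def _ _; rewrite /SE_eqs /RS_eqs.
split=> eqs l lL; move: {eqs}(eqs l lL).
all: rewrite (qz_out_SE_RS V_def _ lL) (qz_mid_SE_RS V_def _ lL) !div1_double_invK.
all: have qx_mid_l := qx_mid_SE_RS V_def (Sx l) (andP lL).2.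
- case=> _ [qzL [qzl [/(iffLR Sx_eq_iff_hqx_eq) hqx [/(iffLR Sh_eq_iff_hqh_eq) hqh
    [qx1 [/(iffLR qx_mid_l) qxl qh_l]]]]]].
  exact: (conj hqx (conj hqh (conj qh_l (conj qzL (conj qzl (conj qx1 qxl)))))).
- case=> /(iffRL Sx_eq_iff_hqx_eq) Sx_l [/(iffRL Sh_eq_iff_hqh_eq) Sh_l
    [qh_l [qzL [qzl [qx1 /(iffRL qx_mid_l) qxl]]]]].
  exact: (conj (V_def _ lL)
    (conj qzL (conj qzl (conj Sx_l (conj Sh_l (conj qx1 (conj qxl qh_l))))))).
Qed.
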